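(* Let $s\geq 1$ and $t\geq 3$ be integers and $\delta>0$. Let $G$ be a bipartite graph with bipartition $A\cup B$, $|B|=n$, containing no copy of $L'_{s,t}$ as a subgraph, such that every vertex of $A$ has degree at least $\delta$ in $G$. Then for every subset $U\subseteq A$ with $|U|\geq \frac{8(s+t)n}{\delta}$ and $|U|\geq 2$, the number of light edges of $W_G$ with both endpoints in $U$ is at least $\frac{\delta^2}{8(s+t)^3 n}\binom{|U|}{2}$.
   Context: For a bipartite graph $G$ with bipartition $A\cup B$, write $d_G(u,v)=|N_G(u)\cap N_G(v)|$ for $u,v\in A$, where $N_G(x)$ is the neighbourhood of $x$ in $G$. The neighbourhood graph $W_G$ is the weighted graph on $A$ where the pair $uv$ has weight $d_G(u,v)$. A pair $uv$ of distinct vertices of $A$ is a light edge if $1\leq d_G(u,v)<\binom{s+t-1}{2}$. The subdivision of a graph $L$ is the bipartite graph with parts $V(L)$ and $E(L)$ in which $v\in V(L)$ is adjacent to $e\in E(L)$ iff $v$ is an endpoint of $e$. $L_{s,t}$ is the graph on vertex set $S\cup T$, $S\cap T=\emptyset$, $|S|=s$, $|T|=t-1$, where distinct $x,y$ are adjacent iff $x\in T$ or $y\in T$; $L'_{s,t}$ is its subdivision. *)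

From HB Require Import structures.
From mathcomp Require Import all_boot all_order all_algebra.
Set Implicit Arguments. Unset Strict Implicit. Unset Printing Implicit Defensive.

(* A (simple) graph is a finType of vertices with a relation.
   [contains_copy h g] : there is an injective map from the vertices of H
   into the vertices of G sending edges to edges (a copy of H as a
   (not necessarily induced) subgraph of G). *)
Definition contains_copy (VH VG : finType) (h : rel VH) (g : rel VG) : Prop :=
  exists f : VH -> VG, injective f /\ (forall x y, h x y -> g (f x) (f y)).

Definition bip_graph (A B : finType) (adj : A -> B -> bool) : rel (A + B)%type :=
  fun x y => match x, y with
             | inl a, inr b => adj a b
             | inr b, inl a => adj a b
             | _, _ => false
             end.

Definition is_edge_set (V : finType) (e : rel V) (E : {set V}) : bool :=
  [exists x, exists y, [&& x != y, e x y & E == [set x; y]]].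

Definition edge_type (V : finType) (e : rel V) : finType :=
  {E : {set V} | is_edge_set e E}.

Definition subdiv_adj (V : finType) (e : rel V) : V -> edge_type e -> bool :=
  fun v E => v \in val E.

Definition subdivision (V : finType) (e : rel V) : rel (V + @edge_type V e)%type :=
  bip_graph (@subdiv_adj V e).

(* L_{s,t}: vertex set S (size s) + T (size t-1); distinct x,y adjacent iff
   x \in T or y \in T. *)
Definition Lst_vert (s t : nat) : finType := ('I_s + 'I_(t.-1))%type.

Definition is_T (s t : nat) (x : Lst_vert s t) : bool :=
  if x is inr _ then true else false.

Definition Lst (s t : nat) : rel (Lst_vert s t) :=
  fun x y => (x != y) && (@is_T s t x || @is_T s t y).

Arguments Lst s t : clear implicits.
Arguments is_T s t x : clear implicits.

Definition Lst' (s t : nat) := @subdivision (Lst_vert s t) (Lst s t).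
Arguments Lst' s t : clear implicits.

Definition codeg (A B : finType) (adj : A -> B -> bool) (u v : A) : nat :=
  #|[set b | adj u b && adj v b]|.

Definition degA (A B : finType) (adj : A -> B -> bool) (u : A) : nat :=
  #|[set b | adj u b]|.

Definition light (s t : nat) (A B : finType) (adj : A -> B -> bool) (u v : A) : bool :=
  [&& u != v, 1 <= codeg adj u v & codeg adj u v < 'C(s + t - 1, 2)].

Arguments light s t {A B} adj u v.

Definition light_edges_in (s t : nat) (A B : finType) (adj : A -> B -> bool)
  (U : {set A}) : {set {set A}} :=
  [set E : {set A} | (E \subset U) &&
     [exists u, exists v, (E == [set u; v]) && light s t adj u v]].

Arguments light_edges_in s t {A B} adj U.

From HB Require Import structures.
From mathcomp Require Import all_boot all_order all_algebra.
From mathcomp Require Import zify ring lra.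
Set Implicit Arguments. Unset Strict Implicit. Unset Printing Implicit Defensive.
Import Order.TTheory GRing.Theory Num.Theory.

(* Fix U and, for b in B, let X_b = U ∩ N(b) and d_b = |X_b|.  Call distinct
   a, a' in A "non-heavy" when their codegree is below C := C(s+t-1, 2).  Two
   vertices of X_b share the neighbour b, so a non-heavy pair inside X_b is a
   light edge.  The proof has three ingredients.
   - Embedding: s+t-1 pairwise heavy vertices of A are the branch vertices of
     a copy of L'_{s,t}, the at most C subdivision vertices being chosen
     greedily among common neighbours.  So the non-heavy graph on X_b has
     independence number at most m := s+t-2.
   - Caro–Wei: a graph on X with independence number at most m has degree sum
     e with |X|^2 <= m (e + |X|); hence d_b^2 <= 2 m e_b + m^2.
   - Double counting: sum_b e_b <= (C-1) * 2 * #light edges, and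
     sum_b d_b = sum_(a in U) deg a >= |U| delta; Cauchy–Schwarz then gives
     (|U| delta)^2 <= n (2 (s+t)^3 L + n (s+t)^2), and the size assumption on
     U absorbs the second term. *)

Lemma sum_filter_set (T : finType) (D : {pred T}) (P : pred T) (f : T -> nat) :
  \sum_(x in [set x in D | P x]) f x = \sum_(x in D) P x * f x.
Proof.
rewrite big_mkcond [RHS]big_mkcond; apply: eq_bigr => x _.
by rewrite !inE; case: (x \in D); case: (P x); rewrite ?mul1n.
Qed.

Lemma card_set_sum (T : finType) (D : {pred T}) (P : pred T) :
  #|[set x in D | P x]| = \sum_(x in D) P x.
Proof.
by rewrite -sum1_card sum_filter_set; apply: eq_bigr => x _; rewrite muln1.
Qed.

Lemma card_set_sumT (T : finType) (P : pred T) : #|[set x | P x]| = \sum_x P x.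
Proof.
by rewrite -card_set_sum; congr #|_|; apply/setP => x; rewrite !inE.
Qed.

Lemma sum_sqr_le (I : finType) (x : I -> nat) :
  (\sum_i x i) ^ 2 <= #|I| * \sum_i x i ^ 2.
Proof.
rewrite -(leq_pmul2l (isT : 0 < 2)) -mulnn big_distrlr big_distrr /=.
apply: (@leq_trans (\sum_i \sum_j (x i ^ 2 + x j ^ 2))).
  apply: leq_sum => i _; rewrite big_distrr /=; apply: leq_sum => j _.
  exact: (nat_Cauchy _ _).1.
under eq_bigr => i _ do rewrite big_split /= sum_nat_const.
by rewrite big_split /= sum_nat_const -big_distrr /= mulnC; lia.
Qed.

Definition degsum (T : finType) (F : rel T) (X : {set T}) : nat :=
  \sum_(x in X) #|[set y in X | F x y]|.

(* The arithmetic step of the Caro–Wei induction. *)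
Lemma caro_wei_arith m a b Q E :
  0 < m -> a ^ 2 <= m.-1 * Q -> Q + b ^ 2 <= E + (a + b) ->
  (a + b) ^ 2 <= m * (E + (a + b)).
Proof.
case: m => // p _ /= le_aQ le_QE; apply: leq_trans (leq_mul (leqnn p.+1) le_QE).
case: p le_aQ => [|p] le_aQ; first by nia.
rewrite -(leq_pmul2l (isT : 0 < p.+1)).
have := (nat_Cauchy (p.+1 * b) a).1; nia.
Qed.

(* Caro–Wei bound: if every F-independent subset of X has at most m
   elements, then |X|^2 <= m (degsum + |X|).  Induction removing the closed
   neighbourhood of a vertex of minimum degree. *)
Lemma caro_wei (T : finType) (F : rel T) (m : nat) (X : {set T}) :
  symmetric F -> irreflexive F ->
  (forall S : {set T}, S \subset X -> {in S &, forall x y, ~~ F x y} -> #|S| <= m) ->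
  #|X| ^ 2 <= m * (degsum F X + #|X|).
Proof.
move=> Fsym Firr; have [n] := ubnP #|X|.
elim: n m X => // n IH m X ltX indep_small.
have [->|/set0Pn [x0 x0X]] := eqVneq X set0; first by rewrite cards0.
pose deg x := #|[set y in X | F x y]|.
have [v vX vmin] := arg_minnP deg x0X.
pose N := [set y in X | F v y]; pose R := v |: N; pose X' := X :\: R.
have RX : R \subset X.
  by apply/subsetP => x; rewrite !inE => /orP[/eqP->|/andP[]].
have cardR : #|R| = (deg v).+1 by rewrite cardsU1 inE Firr andbF.
have cardX : #|X| = #|X'| + #|R|.
  by rewrite cardsD (setIidPr RX); have := subset_leq_card RX; lia.
have m_gt0 : 0 < m.
  apply: leq_trans (indep_small [set x0] _ _); first by rewrite cards1.
    by rewrite sub1set.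
  by move=> x y; rewrite !inE => /eqP-> /eqP->; rewrite Firr.
(* Independent sets of X' extend by v, so X' has independence number < m. *)
have indep_small' (S : {set T}) :
    S \subset X' -> {in S &, forall x y, ~~ F x y} -> #|S| <= m.-1.
  move=> SX' Sindep.
  have vS : v \notin S by apply/negP => /(subsetP SX'); rewrite !inE eqxx.
  have notFv y : y \in S -> ~~ F v y.
    move=> /(subsetP SX'); rewrite !inE negb_or => /andP[/andP[_ nXF] yX].
    by apply: contra nXF => ->; rewrite yX.
  suff : #|v |: S| <= m by rewrite cardsU1 vS; lia.
  apply: indep_small.
    apply/subsetP => x; rewrite !inE => /orP[/eqP->//|/(subsetP SX')].
    by rewrite !inE => /andP[].
  move=> x y; rewrite !inE => /orP[/eqP->|xS] /orP[/eqP->|yS].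
  - by rewrite Firr.
  - exact: notFv.
  - by rewrite Fsym; apply: notFv.
  - exact: Sindep.
(* Every vertex of R has degree at least deg v, and degrees only drop in X'. *)
have degsum_split : degsum F X' + #|R| * deg v <= degsum F X.
  rewrite /degsum [\sum_(x in X) _](big_setID R) /= (setIidPr RX).
  rewrite [X in _ <= X]addnC; apply: leq_add.
    apply: leq_sum => x _; apply: subset_leq_card; apply/subsetP => y.
    by rewrite !inE => /andP[/andP[_ ->] ->].
  rewrite -sum_nat_const; apply: leq_sum => x xR; exact/vmin/(subsetP RX).
have IHX' := IH m.-1 X' (ltac:(lia)) indep_small'.
rewrite cardX; apply: (caro_wei_arith (Q := degsum F X' + #|X'|)) => //.
rewrite cardR in degsum_split *; nia.
Qed.

Lemma greedy_reps_seq (I B : finType) (C : I -> {set B}) (b0 : B) (l : seq I) :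
  uniq l -> (forall i, size l <= #|C i|) ->
  exists h : I -> B, {in l &, injective h} /\ {in l, forall i, h i \in C i}.
Proof.
elim: l => [|i l IH] /=; first by exists (fun=> b0).
case/andP=> il ul sizeC.
have [h [hinj hC]] := IH ul (fun j => ltnW (sizeC j)).
have small_img : #|h @: [set j in l]| < #|C i|.
  apply: leq_ltn_trans (leq_imset_card _ _) _.
  by rewrite cardsE (card_uniqP ul).
have [x xC xnew] : exists2 x, x \in C i & x \notin h @: [set j in l].
  apply/subsetPn; apply: contraTN small_img => /subset_leq_card.
  by rewrite -leqNgt.
have hl j : j \in l -> h j != x.
  by move=> jl; apply: contraNneq xnew => <-; apply: imset_f; rewrite inE.
exists (fun j => if j == i then x else h j); split.
  move=> a b; rewrite !inE.
  case: eqP => [-> _|_ /= al]; case: eqP => [-> _|_ /= bl] //.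
  - by move=> xh; move: (hl b bl); rewrite -xh eqxx.
  - by move=> hx; move: (hl a al); rewrite hx eqxx.
  - exact: hinj.
move=> j; rewrite inE; case: eqP => [-> //|_ /= jl]; exact: hC.
Qed.

Lemma distinct_reps (I B : finType) (C : I -> {set B}) :
  (forall i, #|I| <= #|C i|) ->
  exists h : I -> B, injective h /\ forall i, h i \in C i.
Proof.
move=> sizeC; case: (pickP I) => [i0 _ | I0]; last first.
  exists (fun i => False_rect B (Bool.diff_true_false (I0 i))).
  by split=> i; have := I0 i.
have [b0 _] : exists b0, b0 \in C i0.
  apply/set0Pn; rewrite -card_gt0; apply: leq_trans (sizeC i0).
  by apply/card_gt0P; exists i0.
have sizeC' i : size (enum I) <= #|C i| by rewrite -cardE.
have [h [hinj hC]] := greedy_reps_seq b0 (enum_uniq I) sizeC'.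
by exists h; split=> [a b|i]; [apply: hinj | apply: hC]; rewrite mem_enum.
Qed.

Lemma subdivision_copy (V A B : finType) (e : rel V) (adj : A -> B -> bool)
    (g : V -> A) :
  injective g ->
  (forall x y, x != y -> e x y -> #|edge_type e| <= codeg adj (g x) (g y)) ->
  contains_copy (@subdivision V e) (bip_graph adj).
Proof.
move=> ginj heavy.
pose C (E : edge_type e) := [set b | [forall v in val E, adj (g v) b]].
have sizeC E : #|edge_type e| <= #|C E|.
  case: E => E /= edgeE.
  case/existsP: (edgeE) => x /existsP[y /and3P[xy exy /eqP defE]].
  apply: leq_trans (heavy x y xy exy) (subset_leq_card _).
  apply/subsetP => b; rewrite !inE => /andP[xb yb].
  by apply/forall_inP => v /=; rewrite defE !inE => /orP[] /eqP->.
have [h [hinj hC]] := distinct_reps sizeC.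
exists (fun z => match z with inl v => inl (g v) | inr E => inr (h E) end); split.
  by move=> [a|a] [b|b] //= [] /=; [move/ginj-> | move/hinj->].
by move=> [v|E] [w|F] //= vE; [have := hC F | have := hC E];
  rewrite inE => /forall_inP; apply.
Qed.

Lemma card_edge_type (V : finType) (e : rel V) : #|edge_type e| <= 'C(#|V|, 2).
Proof.
rewrite card_sig -card_draws; apply: subset_leq_card; apply/subsetP => E.
rewrite !inE => /existsP[x /existsP[y /and3P[xy _ /eqP->]]].
by rewrite cards2 xy.
Qed.

Lemma card_Lst_vert s t : 0 < t -> #|Lst_vert s t| = s + t - 1.
Proof. by move=> t0; rewrite card_sum !card_ord; lia. Qed.

Definition nonheavy s t (A B : finType) (adj : A -> B -> bool) (a a' : A) : bool :=
  (a != a') && (codeg adj a a' < 'C(s + t - 1, 2)).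

Lemma codegC (A B : finType) (adj : A -> B -> bool) (x y : A) :
  codeg adj x y = codeg adj y x.
Proof.
by rewrite /codeg; apply: eq_card => b; rewrite !inE andbC.
Qed.

Lemma heavy_set_small s t (A B : finType) (adj : A -> B -> bool) (S : {set A}) :
  0 < t -> ~ contains_copy (Lst' s t) (bip_graph adj) ->
  {in S &, forall x y, ~~ nonheavy s t adj x y} -> #|S| <= s + t - 2.
Proof.
move=> t0 no_copy heavyS; rewrite leqNgt; apply/negP => bigS.
have le_VS : #|Lst_vert s t| <= #|S| by rewrite card_Lst_vert //; lia.
pose g (v : Lst_vert s t) := enum_val (widen_ord le_VS (enum_rank v)).
have ginj : injective g.
  by move=> x y /enum_val_inj /(congr1 val) /= /val_inj /enum_rank_inj.
apply: no_copy; apply: (subdivision_copy ginj) => x y xy _.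
apply: leq_trans (card_edge_type _) _; rewrite card_Lst_vert //.
have := heavyS (g x) (g y) (enum_valP _) (enum_valP _); rewrite /nonheavy.
by rewrite (inj_eq ginj) xy -leqNgt.
Qed.

Lemma nonheavy_bound s t (A B : finType) (adj : A -> B -> bool) (X : {set A}) :
  0 < t -> ~ contains_copy (Lst' s t) (bip_graph adj) ->
  #|X| ^ 2 <= 2 * (s + t - 2) * degsum (nonheavy s t adj) X + (s + t - 2) ^ 2.
Proof.
move=> t0 no_copy; set m := s + t - 2.
have sym : symmetric (nonheavy s t adj) by move=> x y; rewrite /nonheavy eq_sym codegC.
have irr : irreflexive (nonheavy s t adj) by move=> x; rewrite /nonheavy eqxx.
have := caro_wei (m := m) (X := X) sym irr (fun S _ => heavy_set_small t0 no_copy).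
have := (nat_Cauchy m #|X|).1; nia.
Qed.

Section DoubleCounting.
Variables (A B : finType) (adj : A -> B -> bool) (U : {set A}).

Definition nbhd_in (b : B) : {set A} := [set a in U | adj a b].

(* Each a in U lies in deg a of the neighbourhoods. *)
Lemma sum_card_nbhd_in : \sum_b #|nbhd_in b| = \sum_(a in U) degA adj a.
Proof.
under eq_bigr => b _ do rewrite card_set_sum.
by rewrite exchange_big; apply: eq_bigr => a _; rewrite /degA card_set_sumT.
Qed.

(* An F-pair (a, a') of U is counted once for each common neighbour b. *)
Lemma sum_degsum_nbhd_in (F : rel A) :
  \sum_b degsum F (nbhd_in b) =
    \sum_(a in U) \sum_(a' in U) F a a' * codeg adj a a'.
Proof.
rewrite /degsum /nbhd_in.
under eq_bigr => b _ do rewrite sum_filter_set.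
rewrite exchange_big; apply: eq_bigr => a _.
under eq_bigr => b _ do rewrite card_set_sum sum_filter_set big_distrr.
rewrite exchange_big; apply: eq_bigr => a' _.
rewrite /codeg card_set_sumT big_distrr; apply: eq_bigr => b _.
by case: (adj a b); case: (adj a' b); case: (F a a').
Qed.

(* Each light edge in U is counted twice in the light degree sum. *)
Lemma light_degsum s t :
  degsum (light s t adj) U <= 2 * #|light_edges_in s t adj U|.
Proof.
set LE := light_edges_in s t adj U.
have LE2 E : E \in LE -> #|E| = 2.
  rewrite inE => /andP[_ /existsP[u /existsP[v /andP[/eqP-> /and3P[uv _ _]]]]].
  by rewrite cards2 uv.
(* a' |-> {a, a'} injects the light neighbours of a into the edges at a. *)
have incident a : a \in U ->
    #|[set a' in U | light s t adj a a']| <= #|[set E in LE | a \in E]|.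
  move=> aU; rewrite -(@card_in_imset _ _ (fun a' => [set a; a'])); last first.
    move=> x y; rewrite !inE => /andP[_ /and3P[ax _ _]] /andP[_ /and3P[ay _ _]] exy.
    have : y \in [set a; x] by rewrite exy !inE eqxx orbT.
    by rewrite !inE eq_sym (negPf ay) => /eqP.
  apply/subset_leq_card/subsetP => E /imsetP[a' ]; rewrite !inE => /andP[a'U la] ->.
  rewrite !inE eqxx andbT; apply/andP; split.
    by apply/subsetP => w; rewrite !inE => /orP[] /eqP->.
  by apply/existsP; exists a; apply/existsP; exists a'; rewrite eqxx.
apply: (@leq_trans (\sum_a #|[set E in LE | a \in E]|)).
  rewrite /degsum [X in _ <= X](bigID [in U]) /=.
  by apply: leq_trans (leq_addr _ _); apply: leq_sum => a; apply: incident.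
under eq_bigr => a _ do rewrite card_set_sum.
rewrite exchange_big /= mulnC -sum_nat_const; apply: eq_leq; apply: eq_bigr => E.
by move=> /LE2 <-; rewrite -card_set_sumT; apply: eq_card => x; rewrite inE.
Qed.

End DoubleCounting.

Lemma nonheavy_codeg_le s t (A B : finType) (adj : A -> B -> bool) (a a' : A) :
  nonheavy s t adj a a' * codeg adj a a' <=
    ('C(s + t - 1, 2)).-1 * light s t adj a a'.
Proof.
rewrite /nonheavy /light; case: (a != a') => //=.
case: (ltnP (codeg adj a a') 'C(s + t - 1, 2)) => //= lt_C.
by case: (codeg adj a a') lt_C => // c lt_C; rewrite mul1n muln1; lia.
Qed.

Lemma double_bin2 n : 2 * 'C(n, 2) = n * n.-1.
Proof. by rewrite -mul_bin_diag bin1. Qed.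

(* 4 (k-2) (C(k-1,2) - 1) <= 2 k^3, the coefficient of the light edges. *)
Lemma binomial_bound k : 4 * (k - 2) * ('C(k - 1, 2)).-1 <= 2 * k ^ 3.
Proof.
have := double_bin2 (k - 1); have -> : (k - 1).-1 = k - 2 by lia.
move=> dbl; apply: (@leq_trans (2 * (k - 2) * (2 * 'C(k - 1, 2)))).
  rewrite [X in _ <= X](_ : _ = 4 * (k - 2) * 'C(k - 1, 2)); last by ring.
  by rewrite leq_mul2l leq_pred orbT.
rewrite dbl; nia.
Qed.

Lemma degree_sum_bound s t (A B : finType) (adj : A -> B -> bool) (U : {set A}) :
  0 < t -> ~ contains_copy (Lst' s t) (bip_graph adj) ->
  (\sum_(a in U) degA adj a) ^ 2 <=
    #|B| * (2 * (s + t) ^ 3 * #|light_edges_in s t adj U| + #|B| * (s + t) ^ 2).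
Proof.
move=> t0 no_copy; set m := s + t - 2; set L := #|light_edges_in s t adj U|.
have nonheavy_total : \sum_b degsum (nonheavy s t adj) (nbhd_in adj U b)
    <= ('C(s + t - 1, 2)).-1 * (2 * L).
  rewrite sum_degsum_nbhd_in.
  apply: (leq_trans _ (leq_mul (leqnn _) (light_degsum adj U s t))).
  rewrite /degsum big_distrr; apply: leq_sum => a _.
  rewrite card_set_sum big_distrr; apply: leq_sum => a' _; exact: nonheavy_codeg_le.
rewrite -sum_card_nbhd_in; apply: (leq_trans (sum_sqr_le _)); apply: leq_mul => //.
apply: (@leq_trans
  (\sum_b (2 * m * degsum (nonheavy s t adj) (nbhd_in adj U b) + m ^ 2))).
  by apply: leq_sum => b _; apply: nonheavy_bound.
rewrite big_split /= sum_nat_const -big_distrr /= -/m.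
apply: leq_add; last by rewrite leq_mul2l leq_exp2r ?leq_subr ?orbT.
apply: leq_trans (leq_mul (leqnn _) nonheavy_total) _.
have -> : 2 * m * (('C(s + t - 1, 2)).-1 * (2 * L)) =
          4 * m * ('C(s + t - 1, 2)).-1 * L by ring.
by rewrite leq_mul2r binomial_bound orbT.
Qed.

Local Open Scope ring_scope.

(* If 8kn <= x, the term n^2 k^2 of the bound is at most x^2 / 64 and can be
   absorbed into the left-hand side. *)
Lemma absorb_lower_order (R : realFieldType) (k n x L : R) :
  0 < k -> 0 < n -> 0 <= L -> 8 * k * n <= x ->
  x ^+ 2 <= n * (2 * k ^+ 3 * L + n * k ^+ 2) -> x ^+ 2 <= 16 * k ^+ 3 * n * L.
Proof.
move=> k0 n0 L0 x_big x_bound.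
have main_term : 0 <= k ^+ 3 * n * L by rewrite !mulr_ge0 ?exprn_ge0 // ltW.
have lower_order : 64 * (n * n * k ^+ 2) <= x ^+ 2.
  have kn0 : 0 <= 8 * k * n by rewrite !mulr_ge0 // ltW.
  have := ler_pM kn0 kn0 x_big x_big; rewrite expr2; nra.
rewrite mulrDr !mulrA in x_bound; nra.
Qed.

Theorem corollary11 (R : realFieldType) (s t : nat) (delta : R)
  (A B : finType) (adj : A -> B -> bool) :
  (1 <= s)%N -> (3 <= t)%N -> 0 < delta ->
  ~ contains_copy (Lst' s t) (bip_graph adj) ->
  (forall a : A, delta <= (degA adj a)%:R) ->
  forall U : {set A},
    (8 * (s + t) * #|B|)%:R / delta <= (#|U|)%:R ->
    (2 <= #|U|)%N ->
    delta ^+ 2 / (8 * (s + t) ^ 3 * #|B|)%:R * ('C(#|U|, 2))%:R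
      <= (#|light_edges_in s t adj U|)%:R.
Proof.
move=> s_gt0 t_ge3 delta_gt0 no_copy min_deg U U_big U_ge2.
set n := #|B|; set u := #|U|; set L := #|light_edges_in s t adj U|.
set k : R := (s + t)%:R.
have [a0 a0U] : exists a, a \in U by apply/set0Pn; rewrite -card_gt0 (leq_trans _ U_ge2).
have n_gt0 : 0 < n%:R :> R.
  by apply: lt_le_trans delta_gt0 (le_trans (min_deg a0) _); rewrite ler_nat max_card.
have k_gt0 : 0 < k by rewrite ltr0n addn_gt0 s_gt0.
have x_big : 8 * k * n%:R <= u%:R * delta.
  by rewrite -ler_pdivrMr // -!natrM.
have x_le_D : u%:R * delta <= (\sum_(a in U) degA adj a)%:R.
  by rewrite natr_sum mulr_natl -sumr_const; apply: ler_sum => a _; exact: min_deg.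
have x_bound : (u%:R * delta) ^+ 2 <= n%:R * (2 * k ^+ 3 * L%:R + n%:R * k ^+ 2).
  apply: le_trans (_ : (\sum_(a in U) degA adj a)%:R ^+ 2 <= _).
    by rewrite ler_sqr ?nnegrE // mulr_ge0 // ltW.
  have := degree_sum_bound U (ltnW (ltnW t_ge3)) no_copy.
  by rewrite /k -(ler_nat R) !(natrM, natrD, natrX).
have main := absorb_lower_order k_gt0 n_gt0 (ler0n _ L) x_big x_bound.
have binom : 2 * 'C(u, 2)%:R <= u%:R ^+ 2 :> R.
  by rewrite -natrX -natrM ler_nat double_bin2 -mulnn leq_mul2l leq_pred orbT.
rewrite natrM natrM natrX -/k mulrAC ler_pdivrMr; last first.
  by rewrite !mulr_gt0 // exprn_gt0.
have := ler_wpM2l (sqr_ge0 delta) binom; nra.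
Qed.
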